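(* Let $X_0$ be a Polish space, $\mathcal{I}$ a $\sigma$-ideal with Borel base on $X_0$, and $X\subseteq X_0$ a Polish subspace. Let $\mathcal{F}$ be a family of functions $X\to X_0$ and $\mathfrak{I}=\{\mathcal{I}_f: f\in\mathcal{F}\}$ such that the pair $(\mathcal{F},\mathfrak{I})$ is fine in $X\subseteq X_0$, and assume (1) $|\mathcal{F}|\le \sup\{\mathrm{Cof}(\mathcal{I}_f): f\in\mathcal{F}\}$; (2) $\sup\{\mathrm{Cof}(\mathcal{I}_f): f\in\mathcal{F}\}\le \mathrm{Cov}(\mathcal{F},\mathfrak{I})$. Then there exists $A\subseteq X$ such that for every $f\in\mathcal{F}$ the image $f[A]$ is completely $\mathcal{I}_f$-nonmeasurable in $f[X]$.
   Context: A $\sigma$-ideal on a set $Y$ is a family of subsets closed under subsets and countable unions and containing all singletons; it has Borel base if every member is contained in a Borel member. For a Polish space $Y$ and a $\sigma$-ideal $\mathcal{J}$ with Borel base on $Y$, $\mathrm{Cof}(\mathcal{J})=\min\{|\mathcal{B}|:\mathcal{B}\subseteq \mathrm{Bor}(Y)\setminus\mathcal{J},\ \forall A\in \mathrm{Bor}(Y)\setminus\mathcal{J}\ \exists B\in\mathcal{B}\ B\subseteq A\}$. A set $S\subseteq Y$ is completely $\mathcal{J}$-nonmeasurable in $Y$ if for every Borel $B\subseteq Y$ with $B\notin\mathcal{J}$ we have $S\cap B\neq\emptyset$ and $B\setminus S\neq\emptyset$. The pair $(\mathcal{F},\mathfrak{I})$, where $\mathcal{F}$ is a family of functions from $X$ to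 $X_0$ and $\mathfrak{I}=\{\mathcal{I}_f:f\in\mathcal{F}\}$, is fine in $X\subseteq X_0$ if for every $f\in\mathcal{F}$, $f[X]$ is a Polish subspace of $X_0$ and $\mathcal{I}_f$ is a $\sigma$-ideal with Borel base on $f[X]$ containing all singletons of $f[X]$. Define $\mathrm{Cov}(\mathcal{F},\mathfrak{I})$ as the minimum of $|Z|$ over all $Z\subseteq X_0$ for which there exist $f\in\mathcal{F}$, a Borel set $B\subseteq f[X]$ with $B\notin\mathcal{I}_f$, and $\mathcal{F}_0\subseteq\mathcal{F}$ with $|\mathcal{F}_0|\le|Z|$ such that $f^{-1}[B]\subseteq\bigcup\{h^{-1}[Z]: h\in\mathcal{F}_0\}$. *)

From HB Require Import structures.
From mathcomp Require Import all_boot all_order all_algebra.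
From mathcomp Require Import all_classical all_reals all_analysis.
From mathcomp Require Import Rstruct.
Set Implicit Arguments. Unset Strict Implicit. Unset Printing Implicit Defensive.
Import Order.TTheory GRing.Theory Num.Theory.
Local Open Scope classical_set_scope.
Local Open Scope ring_scope.

Notation RR := Rdefinitions.R.

Section Defs.
Context {T : topologicalType}.

Definition subspace_borel (Y : set T) : set (set T) :=
  <<s Y, [set O `&` Y | O in [set O : set T | open O]] >>.

Definition borel_in (Y B : set T) : Prop := B `<=` Y /\ subspace_borel Y B.

Definition separable_subspace (Y : set T) : Prop :=
  exists D : set T, [/\ D `<=` Y, countable D &
    forall O : set T, open O -> O `&` Y !=set0 -> O `&` D !=set0].

Definition completely_metrizable_subspace (Y : set T) : Prop :=
  exists d : T -> T -> RR,
  [/\ ((forall x y, Y x -> Y y -> 0 <= d x y) /\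
      (forall x y, Y x -> Y y -> (d x y = 0 <-> x = y)) /\
      (forall x y, Y x -> Y y -> d x y = d y x) /\
      (forall x y z, Y x -> Y y -> Y z -> d x z <= d x y + d y z)),
      (forall (O : set T) x, open O -> O x -> Y x ->
          exists2 e : RR, 0 < e & forall y, Y y -> d x y < e -> O y),
      (forall x (e : RR), Y x -> 0 < e ->
          exists O : set T, [/\ open O, O x & forall y, Y y -> O y -> d x y < e])
    & (forall u : nat -> T, (forall n, Y (u n)) ->
         (forall e : RR, 0 < e -> exists N, forall m n, (N <= m)%N -> (N <= n)%N ->
              d (u m) (u n) < e) ->
         exists2 x, Y x & forall e : RR, 0 < e -> exists N, forall n, (N <= n)%N ->
              d (u n) x < e)].

Definition polish_subspace (Y : set T) : Prop :=
  separable_subspace Y /\ completely_metrizable_subspace Y.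

Definition sigma_ideal_Borel_base (Y : set T) (J : set (set T)) : Prop :=
  [/\ (forall A, J A -> A `<=` Y),
      (forall A B, J A -> B `<=` A -> J B),
      (forall A : nat -> set T, (forall n, J (A n)) -> J (\bigcup_n A n)),
      (forall y, Y y -> J [set y])
    & (forall A, J A -> exists B, [/\ borel_in Y B, J B & A `<=` B])].

(* Cof(J) <= |M|  (Cof(J) is a minimum of cardinals, hence attained, so this is
   equivalent to the existence of a witnessing family of size <= |M|). *)
Definition cof_le (Y : set T) (J : set (set T)) (U : Type) (M : set U) : Prop :=
  exists Bf : set (set T),
  [/\ Bf `<=` [set B | borel_in Y B /\ ~ J B],
      (forall A, borel_in Y A -> ~ J A -> exists2 B, Bf B & B `<=` A)
    & (Bf #<= M)%card].

Definition completely_nonmeasurable (J : set (set T)) (Y S : set T) : Prop :=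
  forall B, borel_in Y B -> ~ J B -> S `&` B !=set0 /\ B `\` S !=set0.

Definition fine_pair (X : set T) (F : set (X -> T)) (I : (X -> T) -> set (set T))
  : Prop :=
  forall f, F f -> polish_subspace (range f) /\ sigma_ideal_Borel_base (range f) (I f).

End Defs.

From HB Require Import structures.
From mathcomp Require Import all_boot all_order all_algebra.
From mathcomp Require Import all_classical all_reals all_analysis.
From mathcomp Require Import wochoice.
Local Open Scope classical_set_scope.
Local Open Scope card_scope.

(* Let kappa be the supremum of the Cof (I f): well-order the
   type [set T] and take the least initial segment K whose size bounds every
   Cof (I f); then no proper initial segment of K does.  Since |F| <= kappa
   and kappa * kappa = kappa, the pairs (f, c), with c in a cofinal family of
   size <= kappa for I f, can be ranked injectively into K.  By transfinite
   recursion along this ranking, pick for (f, c) points x, y of X with f x and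
   f y in c, such that f y avoids the images of all earlier x's, y's, and each
   earlier g sends x away from the earlier g y'.  At each stage the points to
   avoid are fewer than kappa, so condition (2) (kappa <= Cov) provides x and
   y; finiteness of kappa is excluded because a sigma-ideal contains all
   countable sets.  The set A of all chosen x's works: a non-ideal Borel set B
   contains some c, and then f x is in f[A] and B while f y is in B but not in
   f[A]. *)

(** * Cardinal arithmetic *)

Lemma card_le_inj {T U} (A : set T) (B : set U) (f : T -> U) :
  (forall x, A x -> B (f x)) ->
  (forall x y, A x -> A y -> f x = f y -> x = y) -> A #<= B.
Proof.
move=> fAB finj; have [g] : $|{injfun A >-> B}|.
  apply/injfunPex; exists f; first by move=> x /fAB.
  by move=> x y /set_mem Ax /set_mem Ay; exact: finj.
exact: inj_card_le.
Qed.

Lemma inj_of_card_le {T U} (u0 : U) {A : set T} {B : set U} : A #<= B ->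
  exists f : T -> U, (forall x, A x -> B (f x)) /\
    (forall x y, A x -> A y -> f x = f y -> x = y).
Proof.
move=> /card_leP[g].
pose f x := if pselect (A x) is left Ax then val (g (exist _ x (mem_set Ax))) else u0.
exists f; split=> [x Ax|x y Ax Ay]; rewrite /f.
  by case: pselect => // Ax'; exact: set_valP.
case: pselect => // Ax'; case: pselect => // Ay'.
by move=> /val_inj /(@inj _ _ _ g) => /(_ (mem_set I) (mem_set I)) [].
Qed.

Lemma partial_choice {T U} (u0 : U) (P : T -> U -> Prop) :
  exists f : T -> U, forall x, (exists y, P x y) -> P x (f x).
Proof.
have [f Pf] : {f & forall x, (exists y, P x y) -> P x (f x)}.
  apply: (@choice _ _ (fun x y => (exists y', P x y') -> P x y)) => x.
  have [[y Py]|noP] := pselect (exists y, P x y).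
    by exists y.
  by exists u0.
by exists f.
Qed.

Lemma proper_witness {T} {A B : set T} {x} : A `<=` B -> B x -> ~ A x -> A `<` B.
Proof. by move=> AB Bx nAx; split=> // /(_ _ Bx). Qed.

Lemma total_on_ub2 {T} {Fs : set (set T)} {G1 G2} : total_on Fs subset ->
  Fs G1 -> Fs G2 -> exists2 G, Fs G & G1 `<=` G /\ G2 `<=` G.
Proof.
move=> tot F1 F2; have [G12|G21] := tot _ _ F1 F2.
  by exists G2 => //; split=> // x.
by exists G1 => //; split=> // x.
Qed.

Section Matching.
Context {T U : Type} (A : set T) (B : set U).

Definition matching (R : set (T * U)) := [/\ R `<=` A `*` B,
  (forall x y y', R (x, y) -> R (x, y') -> y = y') &
  (forall x x' y, R (x, y) -> R (x', y) -> x = x')].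

Lemma exists_maximal_matching :
  exists R, matching R /\ forall R', R `<` R' -> ~ matching R'.
Proof.
apply: Zorn_bigcup => Fs FsM Ftot; split.
- by move=> p [R FR Rp]; have [+ _ _] := FsM _ FR; apply.
- move=> x y y' [R1 F1 h1] [R2 F2 h2].
  have [R FR [s1 s2]] := total_on_ub2 Ftot F1 F2.
  by have [_ + _] := FsM _ FR; apply; [exact: s1 _ h1|exact: s2 _ h2].
- move=> x x' y [R1 F1 h1] [R2 F2 h2].
  have [R FR [s1 s2]] := total_on_ub2 Ftot F1 F2.
  by have [_ _ +] := FsM _ FR; apply; [exact: s1 _ h1|exact: s2 _ h2].
Qed.

Lemma maximal_matching_saturated {R a b} : matching R ->
  (forall R', R `<` R' -> ~ matching R') -> A a -> B b ->
  (exists b', R (a, b')) \/ (exists a', R (a', b)).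
Proof.
move=> [RAB Rf Ri] Rmax Aa Bb; apply: contrapT => /not_orP[noa nob].
apply: (Rmax (R `|` [set (a, b)])).
  apply: (@proper_witness _ _ _ (a, b)); first by move=> p; left.
    by right.
  by move=> Rab; apply: noa; exists b.
split.
- by move=> p [/RAB //|->].
- move=> x y y' [Rxy|[= ex ey]] [Rxy'|[= ex' ey']]; subst => //.
  + exact: Rf Rxy Rxy'.
  + by case: noa; exists y.
  + by case: noa; exists y'.
- move=> x x' y [Rxy|[= ex ey]] [Rxy'|[= ex' ey']]; subst => //.
  + exact: Ri Rxy Rxy'.
  + by case: nob; exists x.
  + by case: nob; exists x'.
Qed.

End Matching.

Lemma card_le_total {T U} (A : set T) (B : set U) : A #<= B \/ B #<= A.
Proof.
have [R [MR Rmax]] := exists_maximal_matching A B; have [RAB Rf Ri] := MR.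
have [allA|/existsNP[a /not_implyP[Aa noa]]] :=
    pselect (forall a, A a -> exists b, R (a, b)).
  left; have [[a0 Aa0]|/nonemptyPn ->] := pselect (A !=set0); last exact: card_ge0.
  have [b0 _] := allA a0 Aa0.
  have [f fR] := partial_choice b0 (fun a b => R (a, b)).
  apply: (@card_le_inj _ _ _ _ f) => [x Ax|x y Ax Ay fxy].
    by have [] := RAB _ (fR _ (allA _ Ax)).
  apply: (Ri _ _ (f x)); first exact: fR (allA _ Ax).
  by rewrite fxy; exact: fR (allA _ Ay).
right; have allB b : B b -> exists a', R (a', b).
  by move=> Bb; have [|//] := maximal_matching_saturated _ _ MR Rmax Aa Bb.
have [f fR] := partial_choice a (fun b a' => R (a', b)).
apply: (@card_le_inj _ _ _ _ f) => [x Bx|x y Bx By fxy].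
  by have [] := RAB _ (fR _ (allB _ Bx)).
apply: (Rf (f x)); first exact: fR (allB _ Bx).
by rewrite fxy; exact: fR (allB _ By).
Qed.

Lemma card_le_setX {T1 T2 U1 U2} {A : set T1} {B : set T2} {A' : set U1} {B' : set U2} :
  A #<= A' -> B #<= B' -> A `*` B #<= A' `*` B'.
Proof.
move=> AA' BB'.
have [[a' _]|/nonemptyPn A'0] := pselect (A' !=set0); last first.
  by move: AA'; rewrite A'0 => /card_le0P ->; rewrite set0X; exact: card_ge0.
have [[b' _]|/nonemptyPn B'0] := pselect (B' !=set0); last first.
  by move: BB'; rewrite B'0 => /card_le0P ->; rewrite setX0; exact: card_ge0.
have [f [fA finj]] := inj_of_card_le a' AA'.
have [g [gB ginj]] := inj_of_card_le b' BB'.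
apply: (@card_le_inj _ _ _ _ (fun p => (f p.1, g p.2))) => [[x y] [/= Ax By]|].
  by split; [exact: fA|exact: gB].
move=> [x y] [x' y'] [/= Ax By] [/= Ax' By'] [/finj fx /ginj gy].
by rewrite (fx Ax Ax') (gy By By').
Qed.

Lemma card_setU_le_of_setX {U V} {S : set V} {A B : set U} :
  infinite_set S -> S `*` S #<= S -> A #<= S -> B #<= S -> A `|` B #<= S.
Proof.
move=> Sinf SS AS BS; have [v0 _] := infinite_setN0 Sinf.
have [nu [nuS nuinj]] := inj_of_card_le v0 ((infiniteP S).1 Sinf).
have [a [aS ainj]] := inj_of_card_le v0 AS.
have [b [bS binj]] := inj_of_card_le v0 BS.
have nu01 : nu 0%N <> nu 1%N by move/nuinj => /(_ I I).
pose g u := if pselect (A u) is left _ then (a u, nu 0%N) else (b u, nu 1%N).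
apply: (card_le_trans _ SS); apply: (@card_le_inj _ _ _ _ g) => [u ABu|u u' ABu ABu'].
  rewrite /g; case: pselect => Au; split=> /=; do ?exact: nuS.
    exact: aS.
  by apply: bS; case: ABu.
rewrite /g; case: pselect => Au; case: pselect => Au' [] //.
- by move=> /ainj; apply.
- by move=> _ /esym e01; case: nu01.
- by move=> /binj; apply; [case: ABu|case: ABu'].
Qed.


Section Pairing.
Context {V : Type} (K : set V).
Implicit Types G : set ((V * V) * V).

Definition pairing_dom G : set V := [set a | exists b, G ((a, a), b)].

(* [G] is the graph of an injection [D `*` D -> D], where [D = pairing_dom G] is
   contained in [K]; graphs are used so that Zorn's lemma can order them by
   inclusion. *)
Definition pairing G :=
  [/\ (forall p b b', G (p, b) -> G (p, b') -> b = b'),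
      (forall p q b, G (p, b) -> G (q, b) -> p = q),
      (forall p b, G (p, b) ->
         [/\ pairing_dom G p.1, pairing_dom G p.2 & pairing_dom G b]),
      (forall a a', pairing_dom G a -> pairing_dom G a' -> exists b, G ((a, a'), b))
    & pairing_dom G `<=` K].

Lemma pairing_domS {G G'} : G `<=` G' -> pairing_dom G `<=` pairing_dom G'.
Proof. by move=> GG' a [b Gb]; exists b; exact: GG'. Qed.

Lemma pairing_card {G} :
  pairing G -> pairing_dom G `*` pairing_dom G #<= pairing_dom G.
Proof.
case=> _ Gi Gd Gt _.
have [[a [b _]]|/nonemptyPn ->] := pselect (pairing_dom G !=set0); last first.
  by rewrite setX0; exact: card_ge0.
have [g gG] := partial_choice b (fun p b => G (p, b)).
apply: (@card_le_inj _ _ _ _ g) => [[u v] [/= Du Dv]|].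
  by have [] := Gd _ _ (gG _ (Gt _ _ Du Dv)).
move=> [u v] [u' v'] [/= Du Dv] [/= Du' Dv'] e.
apply: (Gi _ _ (g (u, v))); first exact: gG (Gt _ _ Du Dv).
by rewrite e; exact: gG (Gt _ _ Du' Dv').
Qed.

Lemma pairing_bigcup (Fs : set (set ((V * V) * V))) :
  Fs `<=` pairing -> total_on Fs subset -> pairing (\bigcup_(G in Fs) G).
Proof.
move=> FsP Ftot.
have domU a : pairing_dom (\bigcup_(G in Fs) G) a ->
    exists2 G, Fs G & pairing_dom G a.
  by move=> [b [G FG Gb]]; exists G => //; exists b.
have domS G a : Fs G -> pairing_dom G a -> pairing_dom (\bigcup_(G in Fs) G) a.
  by move=> FG [b Gb]; exists b; exists G.
split.
- move=> p b b' [G1 F1 h1] [G2 F2 h2].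
  have [G FG [s1 s2]] := total_on_ub2 Ftot F1 F2.
  by have [+ _ _ _ _] := FsP _ FG; apply; [exact: s1 _ h1|exact: s2 _ h2].
- move=> p q b [G1 F1 h1] [G2 F2 h2].
  have [G FG [s1 s2]] := total_on_ub2 Ftot F1 F2.
  by have [_ + _ _ _] := FsP _ FG; apply; [exact: s1 _ h1|exact: s2 _ h2].
- move=> p b [G FG Gb]; have [_ _ Gd _ _] := FsP _ FG.
  by have [d1 d2 d3] := Gd _ _ Gb; split; apply: domS FG _.
- move=> a a' /domU[G1 F1 [b1 h1]] /domU[G2 F2 [b2 h2]].
  have [G FG [s1 s2]] := total_on_ub2 Ftot F1 F2; have [_ _ _ Gt _] := FsP _ FG.
  have [b Gb] : exists b, G ((a, a'), b).
    by apply: Gt; [exists b1; exact: s1|exists b2; exact: s2].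
  by exists b; exists G.
- by move=> a /domU[G FG]; have [_ _ _ _ +] := FsP _ FG; apply.
Qed.

Lemma pairing_extend G (D : set V) : pairing G -> pairing_dom G `<=` D -> D `<=` K ->
  D `*` D #<= D `\` pairing_dom G ->
  exists2 G', pairing G' & G `<=` G' /\ pairing_dom G' = D.
Proof.
move=> PG GD DK DD; set A := pairing_dom G.
have [[v0 _]|/nonemptyPn D0] := pselect (D !=set0); last first.
  exists G => //; split=> //; rewrite D0; apply/seteqP; split=> // x /GD.
  by rewrite D0.
have [h [hD hinj]] := inj_of_card_le v0 DD.
case: PG => Gf Gi Gd Gt _.
pose N := [set (p, h p) | p in (D `*` D) `\` (A `*` A)].
have GA p b : G (p, b) -> (A `*` A) p by case/Gd.
have domGN : pairing_dom (G `|` N) = D.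
  apply/seteqP; split=> a.
    move=> [b [Gb|[p [[Dp _] _] [ep _]]]]; first by apply: GD; exists b.
    by move: Dp; rewrite ep.
  move=> Da; have [[b Gb]|nAa] := pselect (A a); first by exists b; left.
  by exists (h (a, a)); right; exists (a, a) => //; split=> // -[].
exists (G `|` N); last by split=> // t Gt'; left.
rewrite /pairing domGN; split.
- move=> p b b' [Gb|[q [_ nAq] [<- <-]]] [Gb'|[q' [_ nAq'] [eq' <-]]] //.
  + exact: Gf Gb Gb'.
  + by case: nAq'; rewrite eq'; exact: GA Gb.
  + by case: nAq; exact: GA Gb'.
  + by rewrite eq'.
- move=> p q b [Gb|[p' [Dp' _] [<- <-]]] [Gb'|[q' [Dq' _] [<- eb]]].
  + exact: Gi Gb Gb'.
  + by have [_ _ Ab] := Gd _ _ Gb; have [] := hD _ Dq'; rewrite eb.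
  + by have [_ _ Ab] := Gd _ _ Gb'; have [] := hD _ Dp'.
  + by apply: hinj; rewrite ?eb.
- move=> p b [Gb|[q [[Dq1 Dq2] _] [<- <-]]].
    by have [d1 d2 d3] := Gd _ _ Gb; split; apply: GD.
  by split=> //; have [] := hD _ (conj Dq1 Dq2).
- move=> a a' Da Da'; have [[Aa Aa']|nAA] := pselect (A a /\ A a').
    by have [b Gb] := Gt _ _ Aa Aa'; exists b; left.
  by exists (h (a, a')); right; exists (a, a').
- exact: DK.
Qed.

Lemma pairing_proper G G' a : G `<=` G' -> pairing_dom G' a -> ~ pairing_dom G a ->
  G `<` G'.
Proof.
move=> GG' [b G'b] nGa; apply: (proper_witness GG' G'b).
by move=> Gb; apply: nGa; exists b.
Qed.

Lemma exists_infinite_pairing :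
  infinite_set K -> exists2 G, pairing G & infinite_set (pairing_dom G).
Proof.
move=> Kinf; have [v0 _] := infinite_setN0 Kinf.
have [nu [nuK nuinj]] := inj_of_card_le v0 ((infiniteP K).1 Kinf).
have natK : [set: nat] #<= range nu.
  by apply: (@card_le_inj _ _ _ _ nu) => [n _|m n _ _ /nuinj]; [exists n|apply].
have dom0 : pairing_dom set0 = set0 by apply/seteqP; split=> // a [].
have nuX : range nu `*` range nu #<= range nu `\` pairing_dom set0.
  rewrite dom0 setD0.
  apply: (card_le_trans (card_le_setX (card_image_le nu setT) (card_image_le nu setT))).
  by rewrite setXTT; exact: card_le_trans (countableP _) natK.
have [G PG [_ domG]] : exists2 G, pairing G &
    set0 `<=` G /\ pairing_dom G = range nu.
  apply: pairing_extend nuX; last by move=> _ [n _ <-]; exact: nuK.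
    by split=> //; rewrite dom0.
  by rewrite dom0.
by exists G => //; rewrite domG; exact/infiniteP.
Qed.

Lemma maximal_pairing_card {G} : pairing G -> infinite_set (pairing_dom G) ->
  (forall G', G `<` G' -> ~ pairing G') -> K #<= pairing_dom G.
Proof.
move=> PG Ainf Gmax; set A := pairing_dom G; have [a Aa] := infinite_setN0 Ainf.
have AK : A `<=` K by case: PG.
have AUA B : B #<= A -> A `|` B #<= A.
  exact: card_setU_le_of_setX Ainf (pairing_card PG) (card_lexx A).
have [KA|AKA] := card_le_total (K `\` A) A.
  apply: card_le_trans (AUA _ KA); apply: subset_card_le => x Kx.
  by have [Ax|nAx] := pselect (A x); [left|right].
exfalso; have [j [jK jinj]] := inj_of_card_le a AKA.
pose C := j @` A.
have CKA : C `<=` K `\` A by move=> _ [a' Aa' <-]; exact: jK.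
have AC : A #<= C by apply: (@card_le_inj _ _ _ _ j) => [a' Aa'|]; [exists a'|].
have ACC : (A `|` C) `*` (A `|` C) #<= (A `|` C) `\` A.
  have ACA := AUA _ (card_image_le j A).
  apply: card_le_trans (card_le_setX ACA ACA) _.
  apply: card_le_trans (pairing_card PG) (card_le_trans AC (subset_card_le _)).
  by move=> c Cc; split; [right|have [] := CKA _ Cc].
have [G' PG' [GG' domG']] : exists2 G', pairing G' &
    G `<=` G' /\ pairing_dom G' = A `|` C.
  by apply: pairing_extend ACC => // x [/AK|/CKA []].
apply: (Gmax G') => //; apply: (@pairing_proper _ _ (j a)) => //.
  by rewrite domG'; right; exists a.
by have [] := CKA (j a) (ex_intro2 _ _ a Aa erefl).
Qed.

End Pairing.

Theorem card_setX_le {V} {K : set V} : infinite_set K -> K `*` K #<= K.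
Proof.
move=> Kinf; have [G0 PG0 G0inf] := exists_infinite_pairing K Kinf.
(* [G = set0] is allowed since it is the union of the empty chain. *)
pose P (G : set ((V * V) * V)) :=
  pairing K G /\ (G = set0 \/ infinite_set (pairing_dom G)).
have [G [[PG Ginf] Gmax]] : exists G, P G /\ forall G', G `<` G' -> ~ P G'.
  apply: Zorn_bigcup => Fs FsP Ftot; split.
    by apply: pairing_bigcup Ftot => G /FsP[].
  have [[G FG [t Gt]]|allE] := pselect (exists2 G, Fs G & G !=set0); last first.
    left; apply/seteqP; split=> // t [G FG Gt].
    by apply: allE; exists G => //; exists t.
  right; have [_ [Gnil|Ginf]] := FsP _ FG; first by rewrite Gnil in Gt.
  by apply: sub_infinite_set Ginf; apply: pairing_domS => u Gu; exists G.
have {}Ginf : infinite_set (pairing_dom G).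
  case: Ginf => // Gnil; have [a [b G0b]] := infinite_setN0 G0inf.
  case: (Gmax G0); last by split=> //; right.
  by rewrite Gnil; apply: (@pairing_proper _ _ _ a) => //; [exists b|case].
have KG : K #<= pairing_dom G.
  apply: (maximal_pairing_card K PG Ginf) => G' GG' PG'; apply: (Gmax G' GG').
  by split=> //; right; exact: sub_infinite_set (pairing_domS (properW GG')) Ginf.
apply: card_le_trans (card_le_setX KG KG) _.
apply: card_le_trans (pairing_card K PG) (subset_card_le _).
by case: PG.
Qed.

Lemma card_setU_le {U V} {S : set V} {A B : set U} :
  infinite_set S -> A #<= S -> B #<= S -> A `|` B #<= S.
Proof. by move=> Sinf; apply: (card_setU_le_of_setX Sinf (card_setX_le Sinf)). Qed.

Lemma card_image_factor_le {W U1 U2} (D : set W) (g : W -> U1) (phi : W -> U2) :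
  (forall w w', D w -> D w' -> phi w = phi w' -> g w = g w') ->
  g @` D #<= phi @` D.
Proof.
move=> gphi; have [[w0 _]|/nonemptyPn ->] := pselect (D !=set0); last first.
  by rewrite image_set0; exact: card_ge0.
have [pre preP] := partial_choice w0 (fun h w => D w /\ g w = h).
have pre_g h : (g @` D) h -> D (pre h) /\ g (pre h) = h.
  by move=> [w Dw <-]; apply: preP; exists w.
apply: (@card_le_inj _ _ _ _ (phi \o pre)) => [h /pre_g[Dh _]|h h'].
  by exists (pre h).
move=> /pre_g[Dh gh] /pre_g[Dh' gh'] /= e.
by rewrite -gh -gh' (gphi _ _ Dh Dh' e).
Qed.

Lemma card_dep_setX_le {A B V} {D : set A} {C : A -> set B} {K : set V} :
  (forall a, D a -> C a #<= K) -> [set p | D p.1 /\ C p.1 p.2] #<= D `*` K.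
Proof.
move=> CK; have [[v0 _]|/nonemptyPn K0] := pselect (K !=set0); last first.
  suff -> : [set p | D p.1 /\ C p.1 p.2] = set0 by exact: card_ge0.
  apply/seteqP; split=> // -[a b] /= [Da Cab].
  by have := CK _ Da; rewrite K0 => /card_le0P C0; move: Cab; rewrite C0.
have [j jP] := partial_choice (fun _ => v0) (fun a (j : B -> V) =>
  (forall b, C a b -> K (j b)) /\ forall b b', C a b -> C a b' -> j b = j b' -> b = b').
apply: (@card_le_inj _ _ _ _ (fun p => (p.1, j p.1 p.2))) => [[a b] /= [Da Cab]|].
  by split=> //=; apply: (jP a (inj_of_card_le v0 (CK _ Da))).1.
move=> [a b] [a' b'] /= [Da Cab] [_ Ca'b'] [ea]; subst a' => e.
by rewrite ((jP a (inj_of_card_le v0 (CK _ Da))).2 _ _ Cab Ca'b' e).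
Qed.

(** * Well-orders and transfinite choice *)

Definition strict_wellorder_on {Q} (D : set Q) (lt : Q -> Q -> Prop) :=
  (forall p q, D p -> D q -> p <> q -> lt p q \/ lt q p) /\
  (forall A, A `<=` D -> A !=set0 -> exists2 m, A m & forall q, A q -> ~ lt q m).

Lemma strict_wellorder_on_irr {Q} {D : set Q} {lt p} :
  strict_wellorder_on D lt -> D p -> ~ lt p p.
Proof.
move=> [_ wf] Dp; have [q -> qmin] : exists2 q, [set p] q & forall r, [set p] r -> ~ lt r q.
  by apply: wf; [move=> _ ->|exists p].
exact: qmin.
Qed.

Lemma well_order_strict {V : eqType} (R : rel V) :
  well_order R -> strict_wellorder_on setT (fun u v => R u v /\ u <> v).
Proof.
move=> wR; have Rwo : wo_chain R predT by exact: withinW.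
split=> [u v _ _ uv|A _ [a Aa]].
  have /orP[Ruv|Rvu] : R u v || R v u by exact: (wo_chainW Rwo).
    by left.
  by right; split=> // /esym.
have [|m [[/asboolP Am mA] _]] := wR [pred u | `[< A u >]].
  by exists a; apply/asboolP.
exists m => // q Aq [Rqm qm]; apply/qm/(wo_chain_antisymmetric Rwo) => //.
by rewrite Rqm mA //; apply/asboolP.
Qed.

Lemma strict_wellorder_on_comp {Q V} {D : set Q} {rk : Q -> V} {lt : V -> V -> Prop} :
  strict_wellorder_on setT lt ->
  (forall p q, D p -> D q -> rk p = rk q -> p = q) ->
  strict_wellorder_on D (fun p q => lt (rk p) (rk q)).
Proof.
move=> [tot wf] rkinj; split=> [p q Dp Dq pq|A AD [a Aa]].
  by apply: tot => // /(rkinj _ _ Dp Dq).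
have [_ [m Am <-] mmin] := wf (rk @` A) (fun _ _ => I) (ex_intro _ (rk a) (imageP rk Aa)).
by exists m => // q Aq; apply: mmin; exists q.
Qed.

Lemma wellorder_minimal_segment {V} {lt : V -> V -> Prop} {P : set V -> Prop} :
  strict_wellorder_on setT lt -> P setT ->
  exists K, P K /\ forall k, K k -> ~ P [set u | lt u k].
Proof.
move=> [_ wf] PT; have [[v Pv]|noseg] := pselect (exists v, P [set u | lt u v]).
  have [m Pm mmin] := wf [set v | P [set u | lt u v]] (fun _ _ => I) (ex_intro _ v Pv).
  by exists [set u | lt u m]; split=> // k km Pk; exact: mmin Pk km.
by exists setT; split=> // k _ Pk; apply: noseg; exists k.
Qed.

Definition coherent {R} (ok : R -> R -> Prop) (sig : set R) :=
  forall t t', sig t -> sig t' -> ok t t'.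

Lemma transfinite_coherent_choice {Q S} {D : set Q} {lt : Q -> Q -> Prop}
    {ok : Q * S -> Q * S -> Prop} :
  strict_wellorder_on D lt ->
  (forall (sig : set (Q * S)) p, D p -> coherent ok sig ->
     (forall t, sig t -> D t.1 /\ lt t.1 p) ->
     exists s, coherent ok (sig `|` [set (p, s)])) ->
  exists sig : set (Q * S), coherent ok sig /\ forall p, D p -> exists s, sig (p, s).
Proof.
move=> [tot wf] step.
pose initial (sig : set (Q * S)) := [/\ coherent ok sig, (forall t, sig t -> D t.1) &
  (forall t q, sig t -> D q -> lt q t.1 -> exists s, sig (q, s))].
have [sig [[sok sD sdown] smax]] :
    exists sig, initial sig /\ forall sig', sig `<` sig' -> ~ initial sig'.
  apply: Zorn_bigcup => Fs FsC Ftot; split.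
  - move=> t t' [G1 F1 h1] [G2 F2 h2].
    have [G FG [s1 s2]] := total_on_ub2 Ftot F1 F2.
    by have [+ _ _] := FsC _ FG; apply; [exact: s1 _ h1|exact: s2 _ h2].
  - by move=> t [G FG Gt]; have [_ + _] := FsC _ FG; apply.
  - move=> t q [G FG Gt] Dq ltq; have [_ _ /(_ _ _ Gt Dq ltq) [s Gs]] := FsC _ FG.
    by exists s; exists G.
exists sig; split=> // p Dp; apply: contrapT => nop.
pose A := [set p | D p /\ ~ exists s, sig (p, s)].
have [m [Dm nom] mmin] : exists2 m, A m & forall q, A q -> ~ lt q m.
  by apply: wf; [move=> ? []|exists p].
have below t : sig t -> D t.1 /\ lt t.1 m.
  move=> st; split; first exact: sD.
  have tm : t.1 <> m by move=> tm; apply: nom; exists t.2; rewrite -tm -surjective_pairing.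
  have [//|ltm] := tot _ _ (sD _ st) Dm tm.
  by case: nom; exact: sdown st Dm ltm.
have [s oks] := step sig m Dm sok below.
apply: (smax (sig `|` [set (m, s)])).
  apply: (proper_witness (x := (m, s))); [by move=> t; left|by right|].
  by move=> sms; apply: nom; exists s.
split=> //; first by move=> t [/sD //|->].
move=> t q [st|->] Dq ltq.
  by have [s' ?] := sdown _ _ st Dq ltq; exists s'; left.
apply: contrapT => noq; apply: (mmin q) => //; split=> // -[s' sqs'].
by apply: noq; exists s'; left.
Qed.

(** * Sigma-ideals with Borel base *)

Section SigmaIdeal.
Context {T : topologicalType} {Y : set T} {J : set (set T)}.
Hypothesis idealJ : sigma_ideal_Borel_base Y J.

Lemma borel_inD {B G} : borel_in Y B -> borel_in Y G -> borel_in Y (B `\` G).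
Proof.
move=> [BY bB] [GY bG]; split; first by move=> x [/BY].
have -> : B `\` G = Y `\` (\bigcup_i bigcup2 (Y `\` B) G i).
  rewrite bigcup2E; apply/seteqP; split.
    by move=> x [Bx nGx]; split; [exact: BY|move=> [[_ ]|]].
  move=> x [Yx nU]; split; first by apply: contrapT => nBx; apply: nU; left.
  by move=> Gx; apply: nU; right.
apply: sigma_algebraCD; apply: sigma_algebra_bigcup => -[|[|i]] /=.
- exact: sigma_algebraCD.
- exact: bG.
- exact: sigma_algebra0.
Qed.

Lemma sigma_idealU {A B} : J A -> J B -> J (A `|` B).
Proof.
case: idealJ => _ sub cup _ _ JA JB; rewrite -bigcup2E.
by apply: cup => -[|[|i]] //=; exact: sub JA _.
Qed.

Lemma sigma_ideal_countable A : Y !=set0 -> A `<=` Y -> countable A -> J A.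
Proof.
case: idealJ => _ sub cup sing _ [y0 Yy0] AY /(inj_of_card_le 0%N) [psi [_ psiinj]].
have -> : A = \bigcup_n [set a | A a /\ psi a = n].
  by apply/seteqP; split=> [a Aa|a [n _ []//]]; exists (psi a).
apply: cup => n; have [[a [Aa <-]]|none] := pselect (exists a, A a /\ psi a = n).
  apply: (sub [set a]); first exact/sing/AY.
  by move=> b [Ab /psiinj ->].
by apply: (sub [set y0]); [exact: sing|move=> a Aa; case: none; exists a].
Qed.

Lemma cof_le_uncountable {U} {W : set U} {B} : Y !=set0 ->
  borel_in Y B -> ~ J B -> cof_le Y J W -> ~ countable W.
Proof.
move=> [y0 Yy0] bB nJB [Bf [BfB Bfcof BfW]] cW.
have [_ Jsub _ _ Jbase] := idealJ.
have [pt ptc] := partial_choice y0 (fun (c : set T) y => c y).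
have Bfpt c : Bf c -> c (pt c).
  move=> Bfc; apply: ptc; apply/set0P/eqP => c0; have [_] := BfB _ Bfc; apply.
  by rewrite c0; apply: sigma_ideal_countable (sub0set _) (countable0 _); exists y0.
pose P := pt @` [set c | Bf c /\ c `<=` B].
have JP : J P.
  apply: sigma_ideal_countable; first by exists y0.
    by move=> _ [c [Bfc _] <-]; have [[cY _] _] := BfB _ Bfc; exact: cY _ (Bfpt _ Bfc).
  apply: card_le_trans (card_image_le _ _) _.
  apply: (card_le_trans _ cW); apply: (card_le_trans _ BfW).
  by apply: subset_card_le => c [].
have [G [bG JG PG]] := Jbase _ JP.
have nJBG : ~ J (B `\` G).
  move=> JBG; apply: nJB; apply: (Jsub _ _ (sigma_idealU JBG JG)).
  by move=> x Bx; have [Gx|nGx] := pselect (G x); [right|left].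
have [c Bfc cBG] := Bfcof _ (borel_inD bB bG) nJBG.
have [_] := cBG _ (Bfpt _ Bfc); apply; apply: PG; exists c => //.
by split=> // x /cBG [].
Qed.

End SigmaIdeal.

Section Construction.
Context {T : topologicalType} {X : set T} (F : set (X -> T)) (I : (X -> T) -> set (set T)).

Definition cof_bound {U} (M : set U) := forall f, F f -> cof_le (range f) (I f) M.

Hypothesis fine : fine_pair F I.
Hypothesis cov : forall (Z : set T) (g : X -> T) (B : set T) (F0 : set (X -> T)),
  F g -> borel_in (range g) B -> ~ I g B ->
  F0 `<=` F -> F0 #<= Z ->
  g @^-1` B `<=` \bigcup_(h in F0) h @^-1` Z -> cof_bound Z.

Lemma cof_boundT : cof_bound [set: set T].
Proof.
move=> f _; exists [set B | borel_in (range f) B /\ ~ I f B]; split=> //.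
  by move=> B bB nIB; exists B.
exact: card_leT.
Qed.

Lemma cof_bound_le {U U'} {M : set U} {M' : set U'} :
  M #<= M' -> cof_bound M -> cof_bound M'.
Proof.
move=> MM' bM f Ff; have [Bf [BfB Bfcof BfM]] := bM f Ff.
by exists Bf; split=> //; exact: card_le_trans BfM MM'.
Qed.

Lemma nonideal_preimage {g B} : F g -> borel_in (range g) B -> ~ I g B ->
  exists x, B (g x).
Proof.
move=> Fg bB nIB; apply: contrapT => noB.
have [|Bf [_ Bfcof /card_le0P Bf0]] :=
    cov set0 _ _ set0 Fg bB nIB (sub0set F) (card_ge0 _ set0) _ g Fg.
  by move=> x Bgx; case: noB; exists x.
by have [c] := Bfcof B bB nIB; rewrite Bf0.
Qed.

Lemma cof_bound_uncountable {U} {W : set U} {f B} : cof_bound W -> F f ->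
  borel_in (range f) B -> ~ I f B -> ~ countable W.
Proof.
move=> bW Ff bB nIB; have [x _] := nonideal_preimage Ff bB nIB.
apply: (cof_le_uncountable (fine f Ff).2 _ bB nIB (bW f Ff)).
by exists (f x); exists x.
Qed.

Lemma exists_point_outside {Z : set T} {f c} : ~ cof_bound Z -> Z !=set0 ->
  F f -> borel_in (range f) c -> ~ I f c -> exists y, c (f y) /\ ~ Z (f y).
Proof.
move=> nZ [z Zz] Ff bc nIc; apply: contrapT => noy; apply: nZ.
apply: (cov _ _ _ [set f] Ff bc nIc) => [_ ->//||x cx].
  by apply: (@card_le_inj _ _ _ _ (fun _ => z)) => // _ _ -> ->.
exists f => //; apply: contrapT => nZx; apply: noy; exists x; split=> //.
Qed.

Lemma exists_point_avoiding {U W} {S : set U} {D : set W} {g : W -> X -> T} {y : W -> X}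
    {f c} : ~ cof_bound S -> D #<= S -> F f -> borel_in (range f) c -> ~ I f c ->
  (forall w, D w -> F (g w)) ->
  (forall w w', D w -> D w' -> g w (y w) = g w' (y w') -> g w = g w') ->
  exists x, c (f x) /\ forall w, D w -> g w x <> g w (y w).
Proof.
move=> nS DS Ff bc nIc DF gy; apply: contrapT => nox; apply: nS.
apply: (cof_bound_le (card_le_trans (card_image_le (fun w => g w (y w)) D) DS)).
apply: (cov _ _ _ (g @` D) Ff bc nIc) => [_ [w Dw <-]||x cx]; first exact: DF.
  exact: card_image_factor_le.
have [w [Dw gx]] : exists w, D w /\ g w x = g w (y w).
  apply: contrapT => nw; apply: nox; exists x; split=> // w Dw gx.
  by apply: nw; exists w.
by exists (g w); [exists w|exists w].
Qed.

Lemma exists_separating_pair {U W} {S : set U} {D : set W} {g : W -> X -> T}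
    (x y : W -> X) {f c} :
  ~ cof_bound S -> D #<= S -> F f -> borel_in (range f) c -> ~ I f c ->
  (forall w, D w -> F (g w)) ->
  (forall w w', D w -> D w' -> g w (y w) = g w' (y w') -> g w = g w') ->
  exists x0 y0, [/\ c (f x0), c (f y0), f x0 <> f y0,
    forall w, D w -> g w x0 <> g w (y w) &
    forall w, D w -> f (x w) <> f y0 /\ g w (y w) <> f y0].
Proof.
move=> nS DS Ff bc nIc DF gy.
have [x0 [cx0 x0y]] := exists_point_avoiding nS DS Ff bc nIc DF gy.
pose Z := [set g w (y w) | w in D] `|` [set f (x w) | w in D] `|` [set f x0].
have nZ : ~ cof_bound Z.
  move=> bZ; have Zunc := cof_bound_uncountable bZ Ff bc nIc.
  have imS (h : W -> T) : h @` D #<= S := card_le_trans (card_image_le h D) DS.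
  have [Sfin|Sinf] := pselect (finite_set S).
    apply/Zunc/finite_set_countable; rewrite !finite_setU.
    by split; [split|exact: finite_set1]; exact: card_le_finite (imS _) Sfin.
  apply/nS/(cof_bound_le _ bZ); have [s Ss] := infinite_setN0 Sinf.
  apply: (card_setU_le Sinf (card_setU_le Sinf (imS _) (imS _))).
  by apply: (@card_le_inj _ _ _ _ (fun _ => s)) => // _ _ -> ->.
have [y0 [cy0 y0Z]] :=
  exists_point_outside nZ (ex_intro _ (f x0) (or_intror erefl)) Ff bc nIc.
exists x0, y0; split=> // [e|w Dw]; first by apply: y0Z; right; exact: esym e.
by split=> e; apply: y0Z; left; [right|left]; exists w.
Qed.

(* [t = ((g, c), (x, y))] records the two points chosen for the set [c] of the
   cofinal family of [g]: [g x] puts a point of [c] into the image of the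
   selector and [g y] keeps one out of it. *)
Definition compatible (t t' : ((X -> T) * set T) * (X * X)) :=
  [/\ t.1.2 (t.1.1 t.2.1), t.1.2 (t.1.1 t.2.2), t'.1.1 t.2.1 <> t'.1.1 t'.2.2,
      t.1 <> t'.1 -> t.1.1 t.2.2 <> t'.1.1 t'.2.2 & t.1 = t'.1 -> t.2 = t'.2].

Lemma compatible_extend {U} {S : set U} {sig : set (((X -> T) * set T) * (X * X))} {f c} :
  ~ cof_bound S -> sig #<= S -> F f -> borel_in (range f) c -> ~ I f c ->
  coherent compatible sig -> (forall t, sig t -> F t.1.1 /\ t.1 <> (f, c)) ->
  exists s, coherent compatible (sig `|` [set ((f, c), s)]).
Proof.
move=> nS sigS Ff bc nIc sok sigF.
have [|x0 [y0 [cx0 cy0 xy0 x0y y0xy]]] := exists_separating_pair (fun t => t.2.1)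
    (fun t => t.2.2) nS sigS Ff bc nIc (fun t st => (sigF t st).1).
  move=> t t' st st' e; have [->//|ne] := pselect (t.1 = t'.1).
  by have [_ _ _ /(_ ne)] := sok _ _ st st'.
exists (x0, y0) => t t' [st|->] [st'|->]; first exact: sok.
- have [ct1 ct2 _ _ _] := sok _ _ st st; have [yx yy] := y0xy _ st.
  by split=> // tfc; case: (sigF _ st).2.
- have [_ yy] := y0xy _ st'.
  split=> //; first exact: x0y.
    by move=> _ /esym; exact: yy.
  by move=> /esym tfc; case: (sigF _ st').2.
- by split.
Qed.

Definition cofinal_family (Y : set T) (J : set (set T)) (C : set (set T)) :=
  C `<=` [set B | borel_in Y B /\ ~ J B] /\
  forall B, borel_in Y B -> ~ J B -> exists2 c, C c & c `<=` B.

Lemma cofinal_families_card {V} {K : set V} : infinite_set K -> F #<= K -> cof_bound K ->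
  exists C : (X -> T) -> set (set T),
    (forall f, F f -> cofinal_family (range f) (I f) (C f)) /\
    [set p | F p.1 /\ C p.1 p.2] #<= K.
Proof.
move=> Kinf FK bK.
have [C CP] := partial_choice set0 (fun f C =>
  cofinal_family (range f) (I f) C /\ C #<= K).
have {}CP f : F f -> cofinal_family (range f) (I f) (C f) /\ C f #<= K.
  by move=> Ff; apply: CP; have [Bf [? ? ?]] := bK f Ff; exists Bf.
exists C; split=> [f /CP[]//|].
apply: (card_le_trans (card_dep_setX_le (fun f Ff => (CP f Ff).2))).
exact: card_le_trans (card_le_setX FK (card_lexx K)) (card_setX_le Kinf).
Qed.

Lemma exists_nonmeasurable_selector {V} {lt : V -> V -> Prop} {K : set V} :
  strict_wellorder_on setT lt -> infinite_set K -> F #<= K -> cof_bound K ->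
  (forall k, K k -> ~ cof_bound [set u | lt u k]) ->
  exists A : set X, forall f, F f -> completely_nonmeasurable (I f) (range f) (f @` A).
Proof.
move=> wo Kinf FK bK Kmin.
have [C [Ccof CK]] := cofinal_families_card Kinf FK bK.
have [v0 _] := infinite_setN0 Kinf.
have [rk [rkK rkinj]] := inj_of_card_le v0 CK.
have [sig [sok sall]] : exists sig, coherent compatible sig /\
    forall p, F p.1 /\ C p.1 p.2 -> exists s, sig (p, s).
  apply: (transfinite_coherent_choice (strict_wellorder_on_comp wo rkinj)).
  move=> sig [f c] /= [Ff Cc] sok below; have [cc _] := Ccof f Ff.
  have [bc nIc] := cc c Cc.
  apply: (compatible_extend (Kmin _ (rkK (f, c) (conj Ff Cc))) _ Ff bc nIc sok).
    apply: (@card_le_inj _ _ _ _ (fun t => rk t.1)) => [t /below[]//|t t' st st'].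
    move=> /(rkinj _ _ (below t st).1 (below t' st').1) e1.
    have [_ _ _ _ /(_ e1) e2] := sok _ _ st st'.
    by rewrite [t]surjective_pairing [t']surjective_pairing e1 e2.
  move=> t st; have [[Ft _] ltt] := below t st; split=> // tfc.
  by move: ltt; rewrite tfc; exact: strict_wellorder_on_irr wo Logic.I.
exists [set t.2.1 | t in sig] => f Ff B bB nIB.
have [c Cc cB] := (Ccof f Ff).2 B bB nIB.
have [s sfs] := sall (f, c) (conj Ff Cc).
have [/= cx cy _ _ _] := sok _ _ sfs sfs.
split; first by exists (f s.1); split; [exists s.1 => //; exists ((f, c), s)|exact: cB].
exists (f s.2); split; first exact: cB.
by move=> [_ [t st <-] ex]; have [_ _ /= + _ _] := sok _ _ st sfs; rewrite ex.
Qed.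

End Construction.

Theorem mainTheorem2 (T : topologicalType) (I0 : set (set T)) (X : set T)
  (F : set (X -> T)) (I : (X -> T) -> set (set T)) :
  polish_subspace [set: T] ->
  sigma_ideal_Borel_base [set: T] I0 ->
  polish_subspace X ->
  fine_pair F I ->
  (* (1) |F| <= sup {Cof(I f) : f in F}: every cardinal upper bound |M| of the
     Cof(I f) is >= |F| *)
  (forall (U : Type) (M : set U),
     (forall f, F f -> cof_le (range f) (I f) M) -> (F #<= M)%card) ->
  (* (2) sup {Cof(I f)} <= Cov(F, I): each Cof(I f) is <= |Z| for every Z
     witnessing the definition of Cov *)
  (forall (Z : set T) (g : X -> T) (B : set T) (F0 : set (X -> T)),
     F g -> borel_in (range g) B -> ~ I g B ->
     F0 `<=` F -> (F0 #<= Z)%card ->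
     g @^-1` B `<=` \bigcup_(h in F0) h @^-1` Z ->
     forall f, F f -> cof_le (range f) (I f) Z) ->
  exists A : set X, forall f, F f ->
    completely_nonmeasurable (I f) (range f) (f @` A).
Proof.
move=> _ _ _ fine cofF cov.
have [R /well_order_strict wo] := well_ordering_principle (set T).
have [K [bK Kmin]] := wellorder_minimal_segment wo (cof_boundT F I).
have [Kfin|Kinf] := pselect (finite_set K).
  exists set0 => f Ff B bB nIB; exfalso.
  exact: (cof_bound_uncountable F I fine cov bK Ff bB nIB (finite_set_countable Kfin)).
exact: (exists_nonmeasurable_selector F I fine cov wo Kinf (cofF _ _ bK) bK Kmin).
Qed.
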